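(* Let $m>1$ and $k$ be positive integers. Then $\mathrm{msum}(mk+1,k)\ge k/2$.
   Context: For positive integers $n>k$, let $S_n$ be the set of permutations $\pi=(\pi_1,\dots,\pi_n)$ of $1,\dots,n$, with cyclic indexing $\pi_{n+i}=\pi_i$, and $s_i=\sum_{j=0}^{k-1}\pi_{i+j}$ for $i=1,\dots,n$. Define $\mathrm{msum}(\pi,k)=\max_{1\le i\le n}s_i-\frac{k(n+1)}{2}$ and $\mathrm{msum}(n,k)=\min_{\pi\in S_n}\mathrm{msum}(\pi,k)$. *)

From mathcomp Require Import all_boot all_order all_algebra.
Set Implicit Arguments. Unset Strict Implicit. Unset Printing Implicit Defensive.
Import Order.TTheory GRing.Theory Num.Theory.

(* A permutation pi = (pi_1,...,pi_n) of 1..n is a sequence p : seq nat with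
   perm_eq p (iota 1 n); pi_{t+1} = nth 0 p t (0-based storage).
   Cyclic indexing: pi_{n+i} = pi_i, i.e. 0-based index taken mod n. *)

(* s_{i+1} = sum_{j=0}^{k-1} pi_{i+1+j}, with i 0-based *)
Definition window (p : seq nat) (k i : nat) : nat :=
  \sum_(j < k) nth 0 p ((i + j) %% size p).

Definition msum_perm (p : seq nat) (k : nat) : rat :=
  ((\max_(i < size p) window p k i)%:R - (k * (size p).+1)%:R / 2)%R.

(* msum(n,k) = min over all permutations of 1..n of msum(pi,k).
   The seed (identity permutation) is itself among the permutations. *)
Definition msum (n k : nat) : rat :=
  \big[Order.min/msum_perm (iota 1 n) k]_(p <- permutations (iota 1 n))
     msum_perm p k.

From mathcomp Require Import all_boot all_order all_algebra.
From mathcomp Require Import lra zify.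
Set Implicit Arguments. Unset Strict Implicit. Unset Printing Implicit Defensive.
Import Order.TTheory GRing.Theory Num.Theory.

(* Let n = m k + 1 and let M be the largest window sum of a permutation.  Going
   once around the cycle starting just after the entry 1, the other m k entries
   split into m consecutive windows of length k, so
   m M >= n (n + 1) / 2 - 1 = m k (m k + 3) / 2, i.e.
   M >= k (m k + 3) / 2 = k (n + 1) / 2 + k / 2. *)

Lemma sum_iota1 n : 2 * \sum_(x <- iota 1 n) x = n * n.+1.
Proof.
elim: n => [|n IHn]; first by rewrite big_nil.
by rewrite -(addn1 n) iotaD big_cat big_seq1 mulnDr IHn /=; lia.
Qed.

Lemma sum_nth_shift_mod (p : seq nat) c :
  \sum_(0 <= r < size p) nth 0 p ((c + r) %% size p) = \sum_(x <- p) x.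
Proof.
rewrite [RHS](big_nth 0) !big_mkord; case: (size p) => [|n]; first by rewrite !big_ord0.
rewrite [RHS](reindex_inj (addrI (inZp c : 'I_n.+1))).
by apply: eq_bigr => r _; rewrite /= modnDml.
Qed.

Lemma window_mod p k i : window p k (i %% size p) = window p k i.
Proof. by apply: eq_bigr => j _; rewrite modnDml. Qed.

Lemma window_le_max p k i : 0 < size p ->
  window p k i <= \max_(j < size p) window p k j.
Proof.
move=> p_gt0; rewrite -window_mod.
exact: (leq_bigmax (Ordinal (ltn_pmod i p_gt0))).
Qed.

Lemma sum_window_blocks p k m c :
  \sum_(0 <= t < m) window p k (c + t * k) =
  \sum_(0 <= r < m * k) nth 0 p ((c + r) %% size p).
Proof.
rewrite big_nat_mul; apply: eq_bigr => t _.
rewrite -{2}[t * k]add0n big_addn mulSn addnK /window big_mkord.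
by apply: eq_bigr => j _; rewrite [j + _]addnC addnA.
Qed.

Lemma sum_cyclic_le_max_window p k m c : 0 < size p ->
  \sum_(0 <= r < m * k) nth 0 p ((c + r) %% size p) <=
  m * \max_(i < size p) window p k i.
Proof.
move=> p_gt0; rewrite -sum_window_blocks.
rewrite -[m in m * _]subn0 -sum_nat_const_nat.
by apply: leq_sum => t _; apply: window_le_max.
Qed.

Lemma max_window_ge_perm_iota p m k : 0 < m -> perm_eq p (iota 1 (m * k + 1)) ->
  k * (m * k + 3) <= 2 * \max_(i < size p) window p k i.
Proof.
move=> m_gt0 p_perm; set M := \max_(i < size p) window p k i.
have size_p : size p = (m * k).+1 by rewrite (perm_size p_perm) size_iota addn1.
have p_gt0 : 0 < size p by rewrite size_p.
have one_in_p : 1 \in p by rewrite (perm_mem p_perm) mem_iota; lia.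
set c := (index 1 p).+1.
have sum_p : 2 * \sum_(x <- p) x = (m * k).+1 * (m * k).+2.
  by rewrite (perm_big _ p_perm) sum_iota1 addn1.
have last_one : nth 0 p ((c + m * k) %% size p) = 1.
  rewrite size_p /c addSnnS modnDr modn_small -?size_p ?index_mem //.
  exact: nth_index.
have blocks : \sum_(0 <= r < m * k) nth 0 p ((c + r) %% size p) <= m * M.
  exact: sum_cyclic_le_max_window.
rewrite -(sum_nth_shift_mod p c) {1}size_p big_nat_recr //= last_one in sum_p.
rewrite -(leq_pmul2l m_gt0); move: blocks sum_p; clearbody M.
move: (\sum_(0 <= r < m * k) _) => S; nia.
Qed.

Lemma msum_perm_ge_half p m k : 0 < m -> perm_eq p (iota 1 (m * k + 1)) ->
  (k%:R / 2 <= msum_perm p k :> rat)%R.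
Proof.
move=> m_gt0 p_perm; have := max_window_ge_perm_iota m_gt0 p_perm.
rewrite /msum_perm (perm_size p_perm) size_iota -(ler_nat rat).
rewrite !natrM !natrD; lra.
Qed.

Lemma le_msum n k (x : rat) :
  (forall p, perm_eq p (iota 1 n) -> x <= msum_perm p k)%R -> (x <= msum n k)%R.
Proof.
move=> x_le; rewrite /msum big_seq.
elim/big_ind: _ => [|y z x_le_y x_le_z|p].
- exact: x_le (perm_refl _).
- by rewrite le_min x_le_y x_le_z.
- by rewrite mem_permutations; apply: x_le.
Qed.

Theorem lemma3p1 (m k : nat) (hm : (1 < m)%N) (hk : (0 < k)%N) :
  ((k%:R / 2 : rat) <= msum (m * k + 1) k)%R.
Proof.
apply: le_msum => p; apply: msum_perm_ge_half.
exact: ltnW hm.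
Qed.
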